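(* Let $\alpha,\beta\in\mathbb{R}$ with $\alpha\neq 0$, and let $G_1$ be the connected, simply connected Lie group whose Lie algebra $\mathfrak{g}_1$ has a basis $\{e_1,e_2,e_3\}$ with $[e_1,e_2]=\alpha e_1-\beta e_3$, $[e_1,e_3]=-\alpha e_1-\beta e_2$, $[e_2,e_3]=\beta e_1+\alpha e_2+\alpha e_3$, equipped with the left-invariant Lorentzian metric $g$ for which $\{e_1,e_2,e_3\}$ is pseudo-orthonormal with $e_3$ timelike, and with the product structure $J$. Let $\lambda_0,c\in\mathbb{R}$. Then there exists a derivation $D$ of $\mathfrak{g}_1$ with $\widetilde{\mathrm{Ric}}^0=(s^0\lambda_0+c)\mathrm{Id}+D$ (i.e. $(G_1,g,J)$ is an algebraic Schouten soliton associated to the canonical connection $\nabla^0$) if and only if $\beta=0$ and $c=-\frac12\alpha^2+2\alpha^2\lambda_0$.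
   Context: Pseudo-orthonormal means $g(e_1,e_1)=g(e_2,e_2)=1$, $g(e_3,e_3)=-1$, $g(e_i,e_j)=0$ for $i\neq j$; left-invariant tensors are identified with their values on $\mathfrak{g}$. $\nabla$ is the Levi-Civita connection of $g$. The product structure $J$ is the left-invariant endomorphism with $Je_1=e_1$, $Je_2=e_2$, $Je_3=-e_3$. The canonical connection is $\nabla^0_XY=\nabla_XY-\frac12(\nabla_XJ)JY$, and the Kobayashi–Nomizu connection is $\nabla^1_XY=\nabla^0_XY-\frac14[(\nabla_YJ)JX-(\nabla_{JY}J)X]$. For $k=0,1$: $R^k(X,Y)Z=\nabla^k_X\nabla^k_YZ-\nabla^k_Y\nabla^k_XZ-\nabla^k_{[X,Y]}Z$; $\rho^k(X,Y)=-g(R^k(X,e_1)Y,e_1)-g(R^k(X,e_2)Y,e_2)+g(R^k(X,e_3)Y,e_3)$; $\widetilde\rho^k(X,Y)=\frac12(\rho^k(X,Y)+\rho^k(Y,X))$; $\widetilde{\mathrm{Ric}}^k$ is defined by $\widetilde\rho^k(X,Y)=g(\widetilde{\mathrm{Ric}}^k(X),Y)$; and $s^k=\widetilde\rho^k(e_1,e_1)+\widetilde\rho^k(e_2,e_2)-\widetilde\rho^k(e_3,e_3)$. A derivation of $\mathfrak{g}$ is a linear map $D$ with $D[X,Y]=[DX,Y]+[X,DY]$. $(G,g,J)$ is an algebraic Schouten soliton associated to $\nabla^k$ (with real constants $\lambda_0,c$) if $\widetilde{\mathrm{Ric}}^k=(s^k\lambda_0+c)\mathrm{Id}+D$ for some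 derivation $D$. *)

From HB Require Import structures.
From mathcomp Require Import all_boot all_order all_algebra.
From mathcomp Require Import reals.
Set Implicit Arguments. Unset Strict Implicit. Unset Printing Implicit Defensive.
Import Order.TTheory GRing.Theory Num.Theory.
Local Open Scope ring_scope.

Section Defs.
Variable R : realType.
Variables alpha beta : R.

Notation V := 'rV[R]_3.

Definition vec3 (a b c : R) : V := \row_(i < 3) [:: a; b; c]`_i.

Definition e (i : 'I_3) : V := delta_mx 0 i.
Definition e1 : V := vec3 1 0 0.
Definition e2 : V := vec3 0 1 0.
Definition e3 : V := vec3 0 0 1.

Definition eps (i : 'I_3) : R := if val i == 2%N then -1 else 1.

Definition brE (i j : 'I_3) : V :=
  match val i, val j with
  | 0%N, 1%N => vec3 alpha 0 (- beta)
  | 1%N, 0%N => - vec3 alpha 0 (- beta)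
  | 0%N, 2%N => vec3 (- alpha) (- beta) 0
  | 2%N, 0%N => - vec3 (- alpha) (- beta) 0
  | 1%N, 2%N => vec3 beta alpha alpha
  | 2%N, 1%N => - vec3 beta alpha alpha
  | _, _ => 0
  end.

Definition br (X Y : V) : V := \sum_(i < 3) \sum_(j < 3) (X 0 i * Y 0 j) *: brE i j.

Definition g (X Y : V) : R := \sum_(i < 3) eps i * X 0 i * Y 0 i.

(* Levi-Civita connection on left-invariant fields (Koszul formula):
   2 g(nabla_X Y, Z) = g([X,Y],Z) - g([Y,Z],X) + g([Z,X],Y) *)
Definition nabla (X Y : V) : V :=
  \sum_(k < 3) (eps k * (2^-1 * (g (br X Y) (e k) - g (br Y (e k)) X + g (br (e k) X) Y))) *: e k.

Definition J (X : V) : V := \row_(i < 3) (eps i * X 0 i).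

Definition nablaJ (X Y : V) : V := nabla X (J Y) - J (nabla X Y).

Definition nabla0 (X Y : V) : V := nabla X Y - 2^-1 *: nablaJ X (J Y).

Definition curv0 (X Y Z : V) : V :=
  nabla0 X (nabla0 Y Z) - nabla0 Y (nabla0 X Z) - nabla0 (br X Y) Z.

Definition rho0 (X Y : V) : R :=
  - g (curv0 X e1 Y) e1 - g (curv0 X e2 Y) e2 + g (curv0 X e3 Y) e3.

Definition rhot0 (X Y : V) : R := 2^-1 * (rho0 X Y + rho0 Y X).

(* Ric~^0 defined by rhot0 X Y = g (Ric X) Y *)
Definition Ric0 (X : V) : V := \sum_(k < 3) (eps k * rhot0 X (e k)) *: e k.

Definition scal0 : R := rhot0 e1 e1 + rhot0 e2 e2 - rhot0 e3 e3.

(* derivation of g_1, as a linear map X |-> X *m D *)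
Definition is_derivation (D : 'M[R]_3) : Prop :=
  forall X Y : V, br X Y *m D = br (X *m D) Y + br X (Y *m D).

Definition algebraic_schouten_soliton0 (lambda0 c : R) : Prop :=
  exists D : 'M[R]_3, is_derivation D /\
    forall X : V, Ric0 X = (scal0 * lambda0 + c) *: X + X *m D.

End Defs.

From HB Require Import structures.
From mathcomp Require Import all_boot all_order all_algebra.
From mathcomp Require Import reals ring lra.
Import Order.TTheory GRing.Theory Num.Theory.
Set Implicit Arguments. Unset Strict Implicit. Unset Printing Implicit Defensive.
Local Open Scope ring_scope.

(* The canonical connection of g_1 is nabla0_X Y = phi(X) rot(Y), with phi a
   linear form and rot the rotation generator of the (e1, e2)-plane.  Since
   these rotations commute, R0(X, Y) = - phi([X, Y]) rot, from which the
   symmetrised Ricci operator is an explicit linear map.  The soliton equation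
   then forces D = Ric0 - k Id with k = s0 lambda0 + c, and testing the
   derivation identity on (e1, e2) gives beta = 0 and k = - alpha^2 / 2;
   conversely these values make Ric0 - k Id a derivation. *)

Definition i0 : 'I_3 := @Ordinal 3 0 isT.
Definition i1 : 'I_3 := @Ordinal 3 1 isT.
Definition i2 : 'I_3 := @Ordinal 3 2 isT.

Lemma big_ord3 (V : nmodType) (F : 'I_3 -> V) :
  \sum_(i < 3) F i = F i0 + F i1 + F i2.
Proof.
rewrite !big_ord_recl big_ord0 addr0 addrA.
by congr (_ + _ + _); congr F; apply: val_inj.
Qed.

Lemma row3P (R : pzRingType) (u v : 'rV[R]_3) :
  u 0 i0 = v 0 i0 -> u 0 i1 = v 0 i1 -> u 0 i2 = v 0 i2 -> u = v.
Proof.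
move=> u0 u1 u2; apply/rowP => -[[|[|[|//]]] lt_j3].
- by rewrite (_ : Ordinal lt_j3 = i0) //; apply: val_inj.
- by rewrite (_ : Ordinal lt_j3 = i1) //; apply: val_inj.
- by rewrite (_ : Ordinal lt_j3 = i2) //; apply: val_inj.
Qed.

Section CanonicalConnection.

Variable R : realType.
Variables a b : R.
Implicit Types X Y Z : 'rV[R]_3.

Lemma e_vec3 : [/\ e R i0 = vec3 1 0 0, e R i1 = vec3 0 1 0 & e R i2 = vec3 0 0 1].
Proof. by split; apply: row3P; rewrite !mxE. Qed.

Definition wedge X Y (i j : 'I_3) : R := X 0 i * Y 0 j - X 0 j * Y 0 i.

Lemma br_vec3 X Y :
  br a b X Y = vec3 (a * wedge X Y i0 i1 - a * wedge X Y i0 i2 + b * wedge X Y i1 i2)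
                    (- b * wedge X Y i0 i2 + a * wedge X Y i1 i2)
                    (- b * wedge X Y i0 i1 + a * wedge X Y i1 i2).
Proof. by apply: row3P; rewrite /br /wedge !big_ord3 !mxE /=; ring. Qed.

Lemma g_coord X Y : g X Y = X 0 i0 * Y 0 i0 + X 0 i1 * Y 0 i1 - X 0 i2 * Y 0 i2.
Proof. by rewrite /g big_ord3 /eps /=; ring. Qed.

Lemma J_vec3 X : J X = vec3 (X 0 i0) (X 0 i1) (- X 0 i2).
Proof. by apply: row3P; rewrite !mxE /eps /=; ring. Qed.

Lemma nabla_vec3 X Y :
  nabla a b X Y = vec3
   (a * X 0 i0 * Y 0 i1 - a * X 0 i0 * Y 0 i2 + 2^-1 * b * wedge X Y i1 i2)
   (- a * X 0 i0 * Y 0 i0 + a * X 0 i1 * Y 0 i2 - a * X 0 i2 * Y 0 i2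
      - 2^-1 * b * wedge X Y i0 i2)
   (- a * X 0 i0 * Y 0 i0 + a * X 0 i1 * Y 0 i1 - a * X 0 i2 * Y 0 i1
      - 2^-1 * b * wedge X Y i0 i1).
Proof.
rewrite /nabla big_ord3; have [-> -> ->] := e_vec3.
rewrite /eps /= !br_vec3.
by apply: row3P; rewrite !mxE /= !g_coord /wedge !mxE /=; field.
Qed.

Definition rot Y := vec3 (Y 0 i1) (- Y 0 i0) 0.

Definition phi X := a * X 0 i0 - 2^-1 * b * X 0 i2.

Lemma nabla0_rot X Y : nabla0 a b X Y = phi X *: rot Y.
Proof.
by rewrite /nabla0 /nablaJ !nabla_vec3 !J_vec3; apply: row3P; rewrite /phi /wedge !mxE /=; field.
Qed.

Lemma curv0_rot X Y Z : curv0 a b X Y Z = - phi (br a b X Y) *: rot Z.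
Proof. by rewrite /curv0 !nabla0_rot; apply: row3P; rewrite !mxE /=; ring. Qed.

Lemma rho0_coord X Y :
  rho0 a b X Y = (- a^+2 * X 0 i1 + a^+2 * X 0 i2 - 2^-1 * b^+2 * X 0 i1) * Y 0 i1
    - (a^+2 * X 0 i0 + 2^-1 * b^+2 * X 0 i0 - 2^-1 * a * b * X 0 i2) * Y 0 i0.
Proof.
by rewrite /rho0 !curv0_rot /phi !br_vec3 /e1 /e2 /e3 !g_coord /wedge !mxE /=; field.
Qed.

Lemma Ric0_vec3 X :
  Ric0 a b X = vec3 ((- 2^-1 * b^+2 - a^+2) * X 0 i0 + 4^-1 * a * b * X 0 i2)
                    ((- 2^-1 * b^+2 - a^+2) * X 0 i1 + 2^-1 * a^+2 * X 0 i2)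
                    (- 4^-1 * a * b * X 0 i0 - 2^-1 * a^+2 * X 0 i1).
Proof.
rewrite /Ric0 big_ord3; have [-> -> ->] := e_vec3.
by rewrite /eps /= /rhot0 !rho0_coord; apply: row3P; rewrite !mxE /=; field.
Qed.

Lemma scal0_coord : scal0 a b = - b^+2 - 2 * a^+2.
Proof. by rewrite /scal0 /rhot0 !rho0_coord /e1 /e2 /e3 !mxE /=; field. Qed.

Definition Ric0_mx : 'M[R]_3 := \matrix_(i, j) Ric0 a b (e R i) 0 j.

Lemma mul_Ric0_mx X : X *m Ric0_mx = Ric0 a b X.
Proof.
have [E0 E1 E2] := e_vec3.
by apply: row3P; rewrite !mxE !big_ord3 !mxE E0 E1 E2 !Ric0_vec3 !mxE /=; ring.
Qed.

Lemma mul_Ric0_shift X k : X *m (Ric0_mx - k%:M) = Ric0 a b X - k *: X.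
Proof. by rewrite mulmxBr mul_Ric0_mx mul_mx_scalar. Qed.

Lemma soliton_matrixE k D :
  (forall X, Ric0 a b X = k *: X + X *m D) -> D = Ric0_mx - k%:M.
Proof.
move=> RicD; apply/row_matrixP => i.
by rewrite !rowE mul_Ric0_shift [Ric0 _ _ _]RicD addrC addKr.
Qed.

Lemma Ric0_shift_derivation k : a != 0 ->
  is_derivation a b (Ric0_mx - k%:M) <-> b = 0 /\ k = - 2^-1 * a^+2.
Proof.
move=> a_neq0; split => [derD | [b0 ->] X Y].
- have /(congr1 (fun v : 'rV[R]_3 => (v 0 i0, v 0 i1))) := derD (e1 R) (e2 R).
  rewrite !mul_Ric0_shift !br_vec3 !Ric0_vec3 /wedge /e1 /e2 !mxE /= => -[d0 d1].
  (* d1 reads - (5/4) a^2 b = 0; once b = 0, d0 reads a (k + a^2/2) = 0. *)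
  have /eqP : a^+2 * b = 0 by lra.
  rewrite mulf_eq0 sqrf_eq0 (negbTE a_neq0) /= => /eqP b0; split=> //; rewrite b0 in d0.
  have /eqP : a * (k + 2^-1 * a^+2) = 0 by lra.
  by rewrite mulf_eq0 (negbTE a_neq0) addr_eq0 => /eqP ->; rewrite mulNr.
- by rewrite !mul_Ric0_shift !br_vec3; apply: row3P; rewrite !Ric0_vec3 b0 /wedge !mxE /=; field.
Qed.

End CanonicalConnection.

Theorem theorem4p2 (R : realType) (alpha beta lambda0 c : R) :
  alpha != 0 ->
  (algebraic_schouten_soliton0 alpha beta lambda0 c <->
   beta = 0 /\ c = - 2^-1 * alpha ^+ 2 + 2 * alpha ^+ 2 * lambda0).
Proof.
move=> alpha_neq0; split.
- case=> D [derD RicD]; rewrite (soliton_matrixE RicD) in derD.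
  have [beta0 k_eq] := (Ric0_shift_derivation _ _ alpha_neq0).1 derD.
  by split=> //; rewrite scal0_coord beta0 in k_eq; rewrite -k_eq; ring.
- case=> beta0 c_eq; exists (Ric0_mx alpha beta - (scal0 alpha beta * lambda0 + c)%:M).
  split; last by move=> X; rewrite mul_Ric0_shift addrC subrK.
  by apply/Ric0_shift_derivation => //; split=> //; rewrite scal0_coord c_eq beta0; ring.
Qed.
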